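(* Let $G(z)=\sum_{n=1}^\infty\frac{i}{(z+(n-\frac12)i)^2}$, the meromorphic extension of the Cauchy transform of the logistic distribution $\mu_2(dx)=\frac{\pi}{2\cosh^2(\pi x)}dx$. Then (i) $\operatorname{Re}G(x+yi)>0$ for all $x>0$ and $y\ge-\frac12$; and (ii) $\operatorname{Im}G(yi)<0$ for all $y>-\frac12$. *)

From Stdlib Require Import Reals Lra.
Open Scope R_scope.

Record Cplx := mkC { Cre : R ; Cim : R }.

Definition Cadd (z w : Cplx) : Cplx := mkC (Cre z + Cre w) (Cim z + Cim w).
Definition Cmul (z w : Cplx) : Cplx :=
  mkC (Cre z * Cre w - Cim z * Cim w) (Cre z * Cim w + Cim z * Cre w).
Definition Cinv (z : Cplx) : Cplx :=
  let d := Cre z * Cre z + Cim z * Cim z in mkC (Cre z / d) (- Cim z / d).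
Definition Ci : Cplx := mkC 0 1.
Definition RtoC (r : R) : Cplx := mkC r 0.

Definition Gterm (n : nat) (z : Cplx) : Cplx :=
  let w := Cadd z (Cmul (RtoC (INR n - 1/2)) Ci) in
  Cmul Ci (Cinv (Cmul w w)).

(* The series sum_{n>=1} Gterm n z converges (in C, i.e. componentwise)
   to g.  Note infinite_sum f l means sum_{k>=0} f k = l, so we shift k = n-1. *)
Definition G_sum (z g : Cplx) : Prop :=
  infinite_sum (fun k => Cre (Gterm (S k) z)) (Cre g) /\
  infinite_sum (fun k => Cim (Gterm (S k) z)) (Cim g).

(* Write z = x + i y and Y_k = y + k + 1/2 (k >= 0), so that the k-th term
   of the series is i / w^2 with w = x + i Y_k.  With D = x^2 + Y_k^2 one has
     Re (i / w^2) = 2 x Y_k / D^2,     Im (i / w^2) = (x^2 - Y_k^2) / D^2,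
   hence both components are bounded by 1/D.  When D grows like (k+1)^2 the
   series therefore converges absolutely, by comparison with the telescoping
   series sum 1/((k+1)(k+2)).  The signs are then read off termwise:
   - for x > 0 and y >= -1/2 every Y_k is >= 0, so all real parts are >= 0,
     and the term k = 1 (Y_1 >= 1) is strictly positive;
   - for x = 0 and y > -1/2 every imaginary part equals -1/Y_k^2 < 0.
   A convergent series of nonnegative terms with one positive term has a
   positive sum, which gives both statements. *)

From Pilot Require Import Defs.
From Stdlib Require Import Reals Lra Lia.
From Coquelicot Require Import Coquelicot.
Open Scope R_scope.

(* A convergent series of nonnegative reals with a positive term has a
   positive sum: the sum dominates the partial sum up to that term. *)
Lemma Series_pos (a : nat -> R) (n : nat) :
  ex_series a -> (forall k, 0 <= a k) -> 0 < a n -> 0 < Series a.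
Proof.
intros Ha Hnn Hpos.
assert (Htail : 0 <= Series (fun k => a (S n + k)%nat)).
{ assert (Hzero : Series (fun k => 0 * a (S n + k)%nat) = 0)
    by (rewrite Series_scal_l; ring).
  rewrite <- Hzero. apply Series_le.
  - intro k. rewrite Rmult_0_l. split; [lra | apply Hnn].
  - apply (ex_series_incr_n a (S n)), Ha. }
assert (Hpartial : a n <= sum_f_R0 a n).
{ destruct n as [|n]; simpl; [lra|].
  pose proof (cond_pos_sum a n Hnn). lra. }
rewrite (Series_incr_n a (S n)); [| lia | exact Ha]. change (Init.Nat.pred (S n)) with n. lra.
Qed.

Lemma telescoping_partial_sum (n : nat) :
  sum_f_R0 (fun k => /((INR k + 1) * (INR k + 2))) n = 1 - /(INR n + 2).
Proof.
induction n as [|n IH].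
- simpl. field.
- rewrite tech5, IH, S_INR. pose proof (pos_INR n). field. lra.
Qed.

Lemma telescoping_summable : ex_series (fun k => /((INR k + 1) * (INR k + 2))).
Proof.
exists 1. apply is_series_Reals, is_lim_seq_Reals.
apply is_lim_seq_ext with (fun n => 1 - /(INR n + 2)).
{ intro n. symmetry. apply telescoping_partial_sum. }
replace (Finite 1) with (Rbar_minus 1 0) by (simpl; f_equal; ring).
apply is_lim_seq_minus'; [apply is_lim_seq_const|].
replace (Finite 0) with (Rbar_inv p_infty) by reflexivity.
apply is_lim_seq_inv; [|discriminate].
apply is_lim_seq_le_p_loc with INR; [|apply is_lim_seq_INR].
exists 0%nat. intros. lra.
Qed.

(* Real and imaginary parts of the k-th term of G at z, k >= 0 (the term
   with n = k + 1 in the paper's indexing). *)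
Definition Gre (z : Cplx) (k : nat) : R := Cre (Gterm (S k) z).
Definition Gim (z : Cplx) (k : nat) : R := Cim (Gterm (S k) z).

Definition shift (y : R) (k : nat) : R := y + INR k + 1/2.

(* Explicit form of i / (x + i Y)^2.  No nonvanishing hypothesis is needed
   since both sides use the same (total) inverse of D^2. *)
Lemma Gterm_components (x y : R) (k : nat) :
  let Y := shift y k in let D := x * x + Y * Y in
  Gre (mkC x y) k = 2 * x * Y / (D * D) /\
  Gim (mkC x y) k = (x * x - Y * Y) / (D * D).
Proof.
intros Y D. unfold Gre, Gim, Gterm. cbv zeta.
(* Qualified names: Coquelicot's complex numbers reuse Cinv, RtoC, ... *)
unfold Defs.Cmul, Defs.Cadd, Defs.Cinv, Defs.Ci, Defs.RtoC; cbn [Cre Cim].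
replace (y + ((INR (S k) - 1/2) * 1 + 0 * 0)) with Y
  by (unfold Y, shift; rewrite S_INR; lra).
replace (x + ((INR (S k) - 1/2) * 0 - 0 * 1)) with x by ring.
replace ((x * x - Y * Y) * (x * x - Y * Y) + (x * Y + Y * x) * (x * Y + Y * x))
  with (D * D) by (unfold D; ring).
split; unfold Rdiv; ring.
Qed.

Lemma ratio_bound (N D : R) :
  0 < D -> -D <= N <= D -> Rabs (N / (D * D)) <= / D.
Proof.
intros HD HN.
assert (HinvD : 0 <= / D) by (left; apply Rinv_0_lt_compat, HD).
assert (Hunit : Rabs (N / D) <= 1).
{ unfold Rdiv. rewrite Rabs_mult, (Rabs_pos_eq (/ D)) by exact HinvD.
  apply (Rmult_le_reg_r D); [exact HD|].
  rewrite Rmult_assoc, Rinv_l, Rmult_1_r, Rmult_1_l by lra.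
  apply Rabs_le. exact HN. }
replace (N / (D * D)) with (N / D * / D) by (field; lra).
rewrite Rabs_mult, (Rabs_pos_eq (/ D)) by exact HinvD.
rewrite <- (Rmult_1_l (/ D)) at 2.
apply Rmult_le_compat_r; assumption.
Qed.

Lemma Gterm_bound (x y : R) (k : nat) :
  let Y := shift y k in 0 < x * x + Y * Y ->
  Rabs (Gre (mkC x y) k) <= / (x * x + Y * Y) /\
  Rabs (Gim (mkC x y) k) <= / (x * x + Y * Y).
Proof.
intros Y HD. destruct (Gterm_components x y k) as [Hre Him].
fold Y in Hre, Him. rewrite Hre, Him.
pose proof (Rle_0_sqr (x - Y)). pose proof (Rle_0_sqr (x + Y)).
unfold Rsqr in *.
split; apply ratio_bound; auto; split; nra.
Qed.

Lemma G_summable (x y c : R) :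
  0 < c -> (forall k, c * ((INR k + 1) * (INR k + 1)) <= x * x + shift y k * shift y k) ->
  ex_series (Gre (mkC x y)) /\ ex_series (Gim (mkC x y)).
Proof.
intros Hc Hgrowth.
assert (Hcomp : forall k, / (x * x + shift y k * shift y k) <=
                         2 / c * / ((INR k + 1) * (INR k + 2))).
{ intro k. pose proof (pos_INR k). specialize (Hgrowth k).
  replace (2 / c * / ((INR k + 1) * (INR k + 2)))
    with (/ (c / 2 * ((INR k + 1) * (INR k + 2)))) by (field; lra).
  apply Rinv_le_contravar; nra. }
assert (Hmajor : ex_series (fun k => 2 / c * / ((INR k + 1) * (INR k + 2))))
  by exact (ex_series_scal_l (2 / c) _ telescoping_summable).
assert (HD : forall k, 0 < x * x + shift y k * shift y k).
{ intro k. specialize (Hgrowth k). pose proof (pos_INR k). nra. }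
split; refine (@ex_series_le R_AbsRing R_CompleteNormedModule _ _ _ Hmajor);
  intro k; change norm with Rabs; apply Rle_trans with (2 := Hcomp k).
- apply (proj1 (Gterm_bound x y k (HD k))).
- apply (proj2 (Gterm_bound x y k (HD k))).
Qed.

Lemma G_sum_Series (z : Cplx) :
  ex_series (Gre z) -> ex_series (Gim z) ->
  G_sum z (mkC (Series (Gre z)) (Series (Gim z))).
Proof.
intros Hre Him. split; simpl; apply is_series_Reals, Series_correct; assumption.
Qed.

Lemma Gre_nonneg (x y : R) (k : nat) :
  0 < x -> 0 <= shift y k -> 0 <= Gre (mkC x y) k.
Proof.
intros Hx HY. destruct (Gterm_components x y k) as [E _]. rewrite E.
assert (HD : 0 < x * x + shift y k * shift y k) by nra.
apply Rmult_le_pos; [nra | apply Rlt_le, Rinv_0_lt_compat, Rmult_lt_0_compat; exact HD].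
Qed.

Lemma Gre_pos (x y : R) (k : nat) :
  0 < x -> 0 < shift y k -> 0 < Gre (mkC x y) k.
Proof.
intros Hx HY. destruct (Gterm_components x y k) as [E _]. rewrite E.
assert (HD : 0 < x * x + shift y k * shift y k) by nra.
apply Rmult_lt_0_compat; [nra | apply Rinv_0_lt_compat, Rmult_lt_0_compat; exact HD].
Qed.

Lemma Gim_imag_axis (y : R) (k : nat) :
  shift y k <> 0 -> Gim (mkC 0 y) k = - / (shift y k * shift y k).
Proof.
intros HY. destruct (Gterm_components 0 y k) as [_ E]. rewrite E.
field. exact HY.
Qed.

Lemma growth_right_half (x y : R) (k : nat) :
  0 < x -> -(1/2) <= y ->
  Rmin (x * x) 1 / 2 * ((INR k + 1) * (INR k + 1)) <= x * x + shift y k * shift y k.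
Proof.
intros Hx Hy. set (m := Rmin (x * x) 1).
assert (Hm_pos : 0 < m) by (apply Rmin_pos; nra).
assert (Hm_x : m <= x * x) by apply Rmin_l.
assert (Hm_1 : m <= 1) by apply Rmin_r.
pose proof (pos_INR k).
assert (Hshift : INR k * INR k <= shift y k * shift y k) by (unfold shift; nra).
assert (0 <= (1 - m) * (INR k * INR k)) by (apply Rmult_le_pos; nra).
assert (0 <= m * ((INR k - 1) * (INR k - 1)))
  by (apply Rmult_le_pos; [lra | apply Rle_0_sqr]).
lra.
Qed.

Lemma growth_imag_axis (y : R) (k : nat) :
  -(1/2) < y ->
  Rmin (y + 1/2) 1 * Rmin (y + 1/2) 1 * ((INR k + 1) * (INR k + 1))
    <= shift y k * shift y k.
Proof.
intros Hy. set (m := Rmin (y + 1/2) 1).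
assert (Hm_pos : 0 < m) by (apply Rmin_pos; lra).
assert (Hm_y : m <= y + 1/2) by apply Rmin_l.
assert (Hm_1 : m <= 1) by apply Rmin_r.
pose proof (pos_INR k).
assert (Hshift : m * (INR k + 1) <= shift y k) by (unfold shift; nra).
assert (0 <= m * (INR k + 1)) by nra.
nra.
Qed.

(* Part (i): Re G(x + i y) > 0 for x > 0, y >= -1/2.  All terms have
   nonnegative real part and the term k = 1 (ordinate >= 1) is positive. *)
Lemma G_re_pos (x y : R) :
  0 < x -> -(1/2) <= y -> exists g, G_sum (mkC x y) g /\ 0 < Cre g.
Proof.
intros Hx Hy.
destruct (G_summable x y (Rmin (x * x) 1 / 2)) as [Hre Him].
- assert (0 < Rmin (x * x) 1) by (apply Rmin_pos; nra). lra.
- intro k. apply growth_right_half; assumption.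
- eexists; split; [apply (G_sum_Series _ Hre Him)|]. simpl.
  apply (Series_pos _ 1 Hre).
  + intro k. apply Gre_nonneg; [exact Hx|]. pose proof (pos_INR k). unfold shift. lra.
  + apply Gre_pos; [exact Hx|]. unfold shift. simpl. lra.
Qed.

(* Part (ii): Im G(i y) < 0 for y > -1/2, since every term has imaginary
   part -1/Y_k^2 with Y_k > 0. *)
Lemma G_im_neg_axis (y : R) :
  -(1/2) < y -> exists g, G_sum (mkC 0 y) g /\ Cim g < 0.
Proof.
intros Hy.
destruct (G_summable 0 y (Rmin (y + 1/2) 1 * Rmin (y + 1/2) 1)) as [Hre Him].
- assert (0 < Rmin (y + 1/2) 1) by (apply Rmin_pos; lra). nra.
- intro k. rewrite Rmult_0_l, Rplus_0_l. apply growth_imag_axis, Hy.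
- eexists; split; [apply (G_sum_Series _ Hre Him)|]. simpl.
  assert (Hterm : forall k, 0 < - Gim (mkC 0 y) k).
  { intro k. assert (HY : 0 < shift y k) by (pose proof (pos_INR k); unfold shift; lra).
    rewrite Gim_imag_axis by lra. rewrite Ropp_involutive.
    apply Rinv_0_lt_compat. nra. }
  enough (Hsum : 0 < Series (fun k => - Gim (mkC 0 y) k))
    by (rewrite Series_opp in Hsum; lra).
  apply (Series_pos _ 0); [apply (ex_series_opp _ Him) | intro k; apply Rlt_le |];
    apply Hterm.
Qed.

Theorem mainTheorem8 :
  (forall x y : R, 0 < x -> -(1/2) <= y ->
     exists g : Cplx, G_sum (mkC x y) g /\ 0 < Cre g) /\
  (forall y : R, -(1/2) < y ->
     exists g : Cplx, G_sum (mkC 0 y) g /\ Cim g < 0).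
Proof.
split; [exact G_re_pos | exact G_im_neg_axis].
Qed.
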